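(* Let $(\mathcal{N},P_S)$ be any channel with state, fix $0\in\mathcal{S}$, and let $M\ge2$, $n\in\mathbb{N}$. Then $\eta^{\mathrm{NS},\mathrm{ca}}_{\mathrm{opt},M,n}(\mathcal{N},P_S)$ equals the optimal value of the following linear program in variables $r_{x^n,y^n,s^n}$ ($x^n\in\mathcal{X}^n,y^n\in\mathcal{Y}^n,s^n\in\mathcal{S}^n$) and $q_{x^n\mid s^n}$ ($x^n\in\mathcal{X}^n,s^n\in\mathcal{S}^n$): maximize $\sum_{x^n,y^n,s^n} r_{x^n,y^n,s^n}\,P_S^{\otimes n}(s^n)\,\mathcal{N}^{\otimes n}(y^n\mid x^n,s^n)$ subject to (i) $r_{x^n,y^n,s^n}\ge0$ for all $(x^n,y^n,s^n)$; (ii) $\sum_{x^n}r_{x^n,y^n,s^n}=\frac1M$ for all $(s^n,y^n)$; (iii) $\sum_{x^n}q_{x^n\mid s^n}=1$ for all $s^n$; (iv) $r_{x^n,y^n,s^n}\le q_{x^n\mid s^n}$ for all $(x^n,y^n,s^n)$; (v) for all $i\in[n-1]$ and all $(x^i,y^n,s^n)$: $\sum_{x_{i+1}^n}r_{x^n,y^n,(s^i,s_{i+1}^n)}=\sum_{x_{i+1}^n}r_{x^n,y^n,(s^i,0^{n-i})}$; (vi) for all $i\in[n-1]$ and all $(x^i,s^n)$: $\sum_{x_{i+1}^n}q_{x^n\mid(s^i,s_{i+1}^n)}=\sum_{x_{i+1}^n}q_{x^n\mid(s^i,0^{n-i})}$, where $0^{k}$ denotes the all-zero sequence of length $k$ and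 in (v),(vi) the sums run over $x_{i+1}^n$ with $x^i$ fixed.
   Context: A channel with state $(\mathcal{N},P_S)$ consists of finite sets $\mathcal{X},\mathcal{Y},\mathcal{S}$, a conditional distribution $\mathcal{N}(y\mid x,s)$ and a state distribution $P_S$; $P_S^{\otimes n}(s^n)=\prod_iP_S(s_i)$, $\mathcal{N}^{\otimes n}(y^n\mid x^n,s^n)=\prod_i\mathcal{N}(y_i\mid x_i,s_i)$. Notation: $x^i=(x_1,\dots,x_i)$, $x_{i+1}^n=(x_{i+1},\dots,x_n)$, $[M]=\{1,\dots,M\}$. An NS-assisted coding scheme with causal CSIT with message size $M$ and blocklength $n$ is a conditional distribution $Z(x^n,\hat w\mid w,s^n,y^n)$ on $\mathcal{X}^n\times[M]$ given $(w,s^n,y^n)\in[M]\times\mathcal{S}^n\times\mathcal{Y}^n$ such that: (C1) $\sum_{\hat w}Z(x^n,\hat w\mid w,s^n,y^n)$ does not depend on $y^n$; (C2) $\sum_{x^n}Z(x^n,\hat w\mid w,s^n,y^n)$ does not depend on $(w,s^n)$; (C3) for each $i\in[n-1]$, $\sum_{x_{i+1}^n}Z(x^n,\hat w\mid w,s^n,y^n)$ does not depend on $s_{i+1}^n$. Its success probability is $\eta(Z)=\frac1M\sum_w\sum_{x^n,s^n,y^n}P_S^{\otimes n}(s^n)\mathcal{N}^{\otimes n}(y^n\mid x^n,s^n)Z(x^n,w\mid w,s^n,y^n)$, and $\eta^{\mathrm{NS},\mathrm{ca}}_{\mathrm{opt},M,n}(\mathcal{N},P_S)$ is the supremum of $\eta(Z)$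 over all such schemes. *)

From HB Require Import structures.
From mathcomp Require Import all_boot all_order all_algebra.
From mathcomp Require Import boolp classical_sets reals.
Set Implicit Arguments. Unset Strict Implicit. Unset Printing Implicit Defensive.
Import Order.TTheory GRing.Theory Num.Theory.
Local Open Scope ring_scope.
Local Open Scope classical_set_scope.

Section Defs.
Variables (R : realType) (X Y S : finType).

(* a channel with state: N x s y = N(y | x, s) *)
Definition is_channel (N : X -> S -> Y -> R) :=
  (forall x s y, 0 <= N x s y) /\ (forall x s, \sum_(y : Y) N x s y = 1).
Definition is_distr (P : S -> R) :=
  (forall s, 0 <= P s) /\ \sum_(s : S) P s = 1.

Definition PSn (n : nat) (P : S -> R) (s : S ^ n) : R := \prod_(i < n) P (s i).
Definition Nn (n : nat) (N : X -> S -> Y -> R) (y : Y ^ n) (x : X ^ n) (s : S ^ n) : R :=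
  \prod_(i < n) N (x i) (s i) (y i).

Definition agree_upto {T : Type} (n i : nat) (u v : T ^ n) : Prop :=
  forall j : 'I_n, (j < i)%N -> u j = v j.

Definition pad0 (n i : nat) (s0 : S) (s : S ^ n) : S ^ n :=
  [ffun j : 'I_n => if (j < i)%N then s j else s0].

(* NS-assisted coding scheme with causal CSIT:
   Z w s y x w' = Z(x^n, w' | w, s^n, y^n) *)
Definition ns_ca_scheme (M n : nat)
    (Z : 'I_M -> S ^ n -> Y ^ n -> X ^ n -> 'I_M -> R) : Prop :=
  (forall w s y x w', 0 <= Z w s y x w') /\
  (forall w s y, \sum_(x : X ^ n) \sum_(w' : 'I_M) Z w s y x w' = 1) /\
  (forall w s y y' x, \sum_(w' : 'I_M) Z w s y x w' = \sum_(w' : 'I_M) Z w s y' x w') /\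
  (forall w w2 s s2 y w', \sum_(x : X ^ n) Z w s y x w' = \sum_(x : X ^ n) Z w2 s2 y x w') /\
  (forall i : nat, (1 <= i)%N -> (i <= n - 1)%N ->
     forall (x0 : X ^ n) (w' w : 'I_M) (s s2 : S ^ n) (y : Y ^ n),
       agree_upto i s s2 ->
       \sum_(x : X ^ n | `[< agree_upto i x x0 >]) Z w s y x w' =
       \sum_(x : X ^ n | `[< agree_upto i x x0 >]) Z w s2 y x w').

Definition success_prob (M n : nat) (N : X -> S -> Y -> R) (P : S -> R)
    (Z : 'I_M -> S ^ n -> Y ^ n -> X ^ n -> 'I_M -> R) : R :=
  M%:R^-1 * \sum_(w : 'I_M) \sum_(x : X ^ n) \sum_(s : S ^ n) \sum_(y : Y ^ n)
     PSn P s * Nn N y x s * Z w s y x w.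

Definition eta_opt (M n : nat) (N : X -> S -> Y -> R) (P : S -> R) : R :=
  sup [set e | exists Z : 'I_M -> S ^ n -> Y ^ n -> X ^ n -> 'I_M -> R, ns_ca_scheme Z /\ success_prob N P Z = e].

(* the linear program: r x y s = r_{x^n,y^n,s^n}, q x s = q_{x^n|s^n} *)
Definition lp_feasible (M n : nat) (s0 : S)
    (r : X ^ n -> Y ^ n -> S ^ n -> R) (q : X ^ n -> S ^ n -> R) : Prop :=
  (forall x y s, 0 <= r x y s) /\
  (forall s y, \sum_(x : X ^ n) r x y s = M%:R^-1) /\
  (forall s, \sum_(x : X ^ n) q x s = 1) /\
  (forall x y s, r x y s <= q x s) /\
  (forall i : nat, (1 <= i)%N -> (i <= n - 1)%N ->
     forall (x0 : X ^ n) (y : Y ^ n) (s : S ^ n),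
       \sum_(x : X ^ n | `[< agree_upto i x x0 >]) r x y s =
       \sum_(x : X ^ n | `[< agree_upto i x x0 >]) r x y (pad0 i s0 s)) /\
  (forall i : nat, (1 <= i)%N -> (i <= n - 1)%N ->
     forall (x0 : X ^ n) (s : S ^ n),
       \sum_(x : X ^ n | `[< agree_upto i x x0 >]) q x s =
       \sum_(x : X ^ n | `[< agree_upto i x x0 >]) q x (pad0 i s0 s)).

Definition lp_objective (n : nat) (N : X -> S -> Y -> R) (P : S -> R)
    (r : X ^ n -> Y ^ n -> S ^ n -> R) : R :=
  \sum_(x : X ^ n) \sum_(y : Y ^ n) \sum_(s : S ^ n) r x y s * PSn P s * Nn N y x s.

Definition lp_opt (M n : nat) (s0 : S) (N : X -> S -> Y -> R) (P : S -> R) : R :=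
  sup [set v | exists (r : X ^ n -> Y ^ n -> S ^ n -> R) q, lp_feasible M s0 r q /\ lp_objective N P r = v].

End Defs.

Arguments eta_opt {R X Y S} M n N P.
Arguments lp_opt {R X Y S} M n s0 N P.

From HB Require Import structures.
From mathcomp Require Import all_boot all_order all_algebra.
From mathcomp Require Import boolp classical_sets reals.
From mathcomp Require Import zify ring.
Import Order.TTheory GRing.Theory Num.Theory.
Local Open Scope ring_scope.
Local Open Scope classical_set_scope.

(* The feasible points of the LP are exactly the pairs of marginals of NS
   schemes, up to symmetrisation over the message.  A scheme Z gives
   r = (1/M) sum_w Z(x, w | w, s, y), the averaged probability of correct
   decoding, and q = (1/M) sum_w sum_w' Z(x, w' | w, s, y), which by (C1) does
   not depend on y; the scheme constraints (C1)-(C3) become (ii)-(vi).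
   Conversely, from (r, q) the scheme that outputs w' = w with weight r and
   spreads the remaining mass q - r uniformly over the M - 1 wrong messages
   is NS with causal CSIT and has success probability equal to the LP
   objective.  Hence the two optimisation problems have the same value set,
   except when Y^n is empty: then the LP is infeasible and every scheme has
   success probability 0, so both suprema are 0. *)

Lemma sumr_if_eq (V : nmodType) (I : finType) (j : I) (a b : V) :
  \sum_(i : I) (if i == j then a else b) = a + b *+ #|I|.-1.
Proof.
rewrite (bigD1 j) //= eqxx; congr (_ + _).
rewrite (eq_bigr (fun _ => b)); last by move=> i /negbTE ->.
by rewrite sumr_const cardC1.
Qed.

Lemma ler_term_sum (R : numDomainType) (I : finType) (F : I -> R) (i : I) :
  (forall j, 0 <= F j) -> F i <= \sum_j F j.
Proof. by move=> F0; rewrite (bigD1 i) //= lerDl sumr_ge0. Qed.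

Lemma channel_no_input {R : realType} {X Y S : finType} {N : X -> S -> Y -> R}
    (s : S) : is_channel N -> #|Y| = 0%N -> #|X| = 0%N.
Proof.
move=> [_ N_sum] noY; apply: eq_card0 => x; exfalso.
have := N_sum x s; rewrite big_pred0 => [/eqP|y]; last first.
  by move: (card0_eq noY y); rewrite !inE.
by rewrite eq_sym oner_eq0.
Qed.

Lemma pad0_agree_upto {S : finType} {n i} (s0 : S) {s s' : S ^ n} :
  agree_upto i s s' -> pad0 i s0 s = pad0 i s0 s'.
Proof. by move=> ss'; apply/ffunP => j; rewrite !ffunE; case: ifP => // /ss'. Qed.

Lemma agree_upto_pad0 {S : finType} {n} i (s0 : S) (s : S ^ n) :
  agree_upto i s (pad0 i s0 s).
Proof. by move=> j ji; rewrite ffunE ji. Qed.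

Section SchemesAndLP.
Variables (R : realType) (X Y S : finType).
Variables (N : X -> S -> Y -> R) (P : S -> R) (s0 : S) (M n : nat).
Hypothesis M_ge2 : (2 <= M)%N.

Let scheme := 'I_M -> S ^ n -> Y ^ n -> X ^ n -> 'I_M -> R.

Lemma natrM_neq0 : M%:R != 0 :> R.
Proof. by rewrite pnatr_eq0; lia. Qed.

Lemma natr_predM_neq0 : M.-1%:R != 0 :> R.
Proof. by rewrite pnatr_eq0; lia. Qed.

Definition lp_scheme (r : X ^ n -> Y ^ n -> S ^ n -> R) (q : X ^ n -> S ^ n -> R)
    : scheme := fun w s y x w' =>
  if w' == w then r x y s else (q x s - r x y s) / M.-1%:R.

Definition scheme_r (Z : scheme) (x : X ^ n) (y : Y ^ n) (s : S ^ n) : R :=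
  M%:R^-1 * \sum_(w : 'I_M) Z w s y x w.

Definition scheme_q (Z : scheme) (y0 : Y ^ n) (x : X ^ n) (s : S ^ n) : R :=
  M%:R^-1 * \sum_(w : 'I_M) \sum_(w' : 'I_M) Z w s y0 x w'.

Section FromLP.
Variables (r : X ^ n -> Y ^ n -> S ^ n -> R) (q : X ^ n -> S ^ n -> R).
Hypothesis feas : lp_feasible M s0 r q.

Lemma lp_scheme_sum_msg w s y x : \sum_(w' : 'I_M) lp_scheme r q w s y x w' = q x s.
Proof.
by rewrite sumr_if_eq card_ord -[_ *+ _]mulr_natr divfK ?natr_predM_neq0 // addrC subrK.
Qed.

Lemma lp_scheme_sum_input w s y w' :
  \sum_(x : X ^ n) lp_scheme r q w s y x w' = M%:R^-1.
Proof.
have [_ [r_sum [q_sum _]]] := feas.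
rewrite /lp_scheme; case: (w' == w); first exact: r_sum.
have M_eq : M%:R = M.-1%:R + 1 :> R by rewrite natr1 prednK //; lia.
rewrite -mulr_suml sumrB q_sum r_sum M_eq; field.
by rewrite natr_predM_neq0 -M_eq natrM_neq0.
Qed.

Lemma lp_scheme_ns_ca : ns_ca_scheme (lp_scheme r q).
Proof.
have [r_ge0 [_ [q_sum [r_le_q [r_causal q_causal]]]]] := feas.
split.
  move=> w s y x w'; rewrite /lp_scheme; case: (w' == w); first exact: r_ge0.
  by rewrite divr_ge0 ?ler0n // subr_ge0.
split; first by move=> w s y; under eq_bigr do rewrite lp_scheme_sum_msg; exact: q_sum.
split; first by move=> w s y y' x; rewrite !lp_scheme_sum_msg.
split; first by move=> w w2 s s2 y w'; rewrite !lp_scheme_sum_input.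
move=> i i1 i2 x0 w' w s s' y ss'.
have pad_eq := pad0_agree_upto s0 ss'.
rewrite /lp_scheme; case: (w' == w).
  by rewrite (r_causal i i1 i2 x0 y s) (r_causal i i1 i2 x0 y s') pad_eq.
rewrite -!mulr_suml !sumrB (r_causal i i1 i2 x0 y s) (r_causal i i1 i2 x0 y s').
by rewrite (q_causal i i1 i2 x0 s) (q_causal i i1 i2 x0 s') pad_eq.
Qed.

Lemma success_prob_lp_scheme : success_prob N P (lp_scheme r q) = lp_objective N P r.
Proof.
rewrite /success_prob (eq_bigr (fun=> lp_objective N P r)).
  by rewrite sumr_const card_ord -[in X in _ * X]mulr_natl mulrA mulVf ?natrM_neq0 ?mul1r.
move=> w _; apply: eq_bigr => x _; rewrite exchange_big; apply: eq_bigr => y _.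
by apply: eq_bigr => s _; rewrite /lp_scheme eqxx mulrC mulrA.
Qed.

End FromLP.

Section FromScheme.
Variables (Z : scheme) (y0 : Y ^ n).
Hypothesis Z_ns : ns_ca_scheme Z.

Lemma scheme_marginals_feasible : lp_feasible M s0 (scheme_r Z) (scheme_q Z y0).
Proof.
have [Z_ge0 [Z_sum [C1 [C2 C3]]]] := Z_ns.
have w0 : 'I_M by exists 0%N; lia.
have invM_ge0 : 0 <= M%:R^-1 :> R by rewrite invr_ge0 ler0n.
split; first by move=> x y s; rewrite mulr_ge0 // sumr_ge0.
split.
  move=> s y; rewrite -mulr_sumr exchange_big /=.
  under eq_bigr do rewrite (C2 _ w0 s s).
  by rewrite -exchange_big /= Z_sum mulr1.
split.
  move=> s; rewrite -mulr_sumr exchange_big /=.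
  under eq_bigr do rewrite Z_sum.
  by rewrite sumr_const card_ord -[in X in _ * X]mulr_natl mulr1 mulVf ?natrM_neq0.
split.
  move=> x y s; rewrite ler_wpM2l // ler_sum // => w _.
  by rewrite (C1 w s y0 y x) ler_term_sum.
split.
  move=> i i1 i2 x0 y s; rewrite -!mulr_sumr; congr (_ * _).
  rewrite exchange_big [RHS]exchange_big /=; apply: eq_bigr => w _.
  exact: C3 (agree_upto_pad0 _ s0 s).
move=> i i1 i2 x0 s; rewrite -!mulr_sumr; congr (_ * _).
rewrite exchange_big [RHS]exchange_big /=; apply: eq_bigr => w _.
rewrite exchange_big [RHS]exchange_big /=; apply: eq_bigr => w' _.
exact: C3 (agree_upto_pad0 _ s0 s).
Qed.

Lemma lp_objective_scheme_r : lp_objective N P (scheme_r Z) = success_prob N P Z.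
Proof.
rewrite /lp_objective /success_prob /scheme_r.
transitivity (M%:R^-1 * \sum_x \sum_y \sum_s \sum_(w : 'I_M)
    PSn P s * Nn N y x s * Z w s y x w).
  rewrite mulr_sumr; apply: eq_bigr => x _; rewrite mulr_sumr; apply: eq_bigr => y _.
  rewrite mulr_sumr; apply: eq_bigr => s _; rewrite !mulr_sumr !mulr_suml.
  by apply: eq_bigr => w _; ring.
congr (_ * _); rewrite [RHS]exchange_big /=; apply: eq_bigr => x _.
rewrite exchange_big /=; under eq_bigr do rewrite exchange_big /=.
by rewrite exchange_big.
Qed.

End FromScheme.

Lemma eta_opt_eq_lp_opt_of_output (y0 : Y ^ n) : eta_opt M n N P = lp_opt M n s0 N P.
Proof.
congr sup; apply/seteqP; split=> e.
  move=> [Z [Z_ns <-]]; exists (scheme_r Z), (scheme_q Z y0).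
  by split; [exact: scheme_marginals_feasible | exact: lp_objective_scheme_r].
move=> [r [q [feas <-]]]; exists (lp_scheme r q).
by split; [exact: lp_scheme_ns_ca | exact: success_prob_lp_scheme].
Qed.

Lemma lp_opt_of_no_input : #|{: X ^ n}| = 0%N -> lp_opt M n s0 N P = 0.
Proof.
move=> noX; rewrite /lp_opt -[RHS]sup0; congr sup.
apply/seteqP; split=> // v [r [q [[_ [_ [q_sum _]]] _]]].
have := q_sum [ffun=> s0]; rewrite big_pred0 => [/eqP|x]; last first.
  by move: (card0_eq noX x); rewrite !inE.
by rewrite eq_sym oner_eq0.
Qed.

Lemma eta_opt_of_no_output : #|{: Y ^ n}| = 0%N -> eta_opt M n N P = 0.
Proof.
move=> noY; rewrite /eta_opt -[RHS]sup1; congr sup.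
have no_y (y : Y ^ n) : False by have := card0_eq noY y; rewrite !inE.
have succ0 (Z : scheme) : success_prob N P Z = 0.
  rewrite /success_prob big1 ?mulr0 // => w _; rewrite big1 // => x _.
  by rewrite big1 // => s _; rewrite big_pred0 // => y; have := no_y y.
apply/seteqP; split=> e; first by move=> [Z [_ <-]]; rewrite succ0.
move=> /= ->; exists (fun _ _ _ _ _ => 0); split; last exact: succ0.
by do !split=> // *; exfalso; apply: no_y.
Qed.

End SchemesAndLP.

Theorem mainTheorem3 (R : realType) (X Y S : finType)
    (N : X -> S -> Y -> R) (P : S -> R) (s0 : S) (M n : nat) :
  is_channel N -> is_distr P -> (2 <= M)%N ->
  eta_opt M n N P = lp_opt M n s0 N P.
Proof.
move=> N_ch _ M_ge2.
case: (pickP (fun _ : Y ^ n => true)) => [y0 _ | noY].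
  exact: eta_opt_eq_lp_opt_of_output.
have cardYn : #|{: Y ^ n}| = 0%N by apply: eq_card0.
move/eqP: (cardYn); rewrite card_ffun card_ord expn_eq0 => /andP[/eqP cardY n_gt0].
have cardXn : #|{: X ^ n}| = 0%N.
  by rewrite card_ffun card_ord (channel_no_input s0 N_ch cardY) exp0n.
by rewrite eta_opt_of_no_output // lp_opt_of_no_input.
Qed.
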